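(* Let $f,g\in\mathrm{Diffeo}^-(\mathbb{R})$ with $f(0)=g(0)=0$ and $f\circ f=g\circ g$. Suppose $0$ is an interior point of $\mathrm{fix}(f\circ f)=\{x\in\mathbb{R}: f(f(x))=x\}$. Then there exists $h\in\mathrm{Diffeo}^+(\mathbb{R})$ with $h(0)=0$, commuting with $f\circ f$, such that $T_0f=(T_0h)^{-1}\circ(T_0g)\circ(T_0h)$; and hence $f$ is conjugate to $g$ by an element of $\mathrm{Diffeo}^+(\mathbb{R})$.
   Context: $\mathrm{Diffeo}(\mathbb{R})$ is the group of $C^\infty$ diffeomorphisms of $\mathbb{R}$ under composition; $\mathrm{Diffeo}^+(\mathbb{R})$ (resp. $\mathrm{Diffeo}^-(\mathbb{R})$) is the set of orientation-preserving (resp. orientation-reversing) diffeomorphisms. For a diffeomorphism $\phi$ with $\phi(0)=0$, $T_0\phi=\phi'(0)X+\frac{\phi''(0)}{2}X^2+\cdots$ is its Taylor series at $0$, an element of the group of formally invertible real formal power series under formal composition, with $^{-1}$ the compositional inverse. *)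

From Stdlib Require Import Reals Lra.
From Coquelicot Require Import Coquelicot.
Open Scope R_scope.

Definition smooth (f : R -> R) : Prop := forall (n : nat) (x : R), ex_derive_n f n x.

Definition is_inverse (f finv : R -> R) : Prop :=
  (forall x, finv (f x) = x) /\ (forall x, f (finv x) = x).

Definition Diffeo (f : R -> R) : Prop :=
  smooth f /\ exists finv, smooth finv /\ is_inverse f finv.

Definition Diffeo_plus (f : R -> R) : Prop :=
  Diffeo f /\ forall x y, x < y -> f x < f y.
Definition Diffeo_minus (f : R -> R) : Prop :=
  Diffeo f /\ forall x y, x < y -> f y < f x.

(** Formal power series over R, as coefficient sequences. *)
Definition fps := nat -> R.

Definition taylor0 (phi : R -> R) : fps := fun n => Derive_n phi n 0 / INR (Factorial.fact n).

Definition fps_mul (a b : fps) : fps :=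
  fun n => sum_f_R0 (fun i => a i * b (n - i)%nat) n.
Fixpoint fps_pow (b : fps) (k : nat) : fps :=
  match k with
  | O => fun n => match n with O => 1 | S _ => 0 end
  | S k' => fps_mul b (fps_pow b k')
  end.

(** Formal composition a o b, for b with zero constant term
    (then (b^k)_n = 0 for k > n, so the sum is finite). *)
Definition fps_comp (a b : fps) : fps :=
  fun n => sum_f_R0 (fun k => a k * fps_pow b k n) n.

Definition fps_X : fps := fun n => match n with 1%nat => 1 | _ => 0 end.

(** Since [f ∘ f] is the identity near 0, so is [g ∘ g = f ∘ f], and for such an involution [u]
    the map [x ↦ (x - u x) / 2] is a diffeomorphism conjugating [u] to [x ↦ -x] near 0.
    Composing the one for [f] with the inverse of the one for [g] gives [l] with [l ∘ f = g ∘ l]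
    near 0 and [l'(0) = 1].  Blending [l] into the identity with a cutoff yields an
    orientation-preserving diffeomorphism [h] equal to [l] near 0 and to the identity outside an
    interval on which [f ∘ f] is the identity; hence [h] commutes with [f ∘ f], and the identity of
    Taylor series follows from [h ∘ f = g ∘ h] near 0.  Finally, [k := h] on [[0, ∞)] and
    [k := g⁻¹ ∘ h ∘ f] on [(-∞, 0)] is smooth because [h ∘ f = g ∘ h] near 0, and [k ∘ f = g ∘ k]
    everywhere because [h] commutes with [f ∘ f = g ∘ g]. *)

From Stdlib Require Import Reals Lra Lia FunctionalExtensionality ClassicalEpsilon Ranalysis5.
From Coquelicot Require Import Coquelicot.
Open Scope R_scope.

Definition increasing (u : R -> R) : Prop := forall x y, x < y -> u x < u y.
Definition decreasing (u : R -> R) : Prop := forall x y, x < y -> u y < u x.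

Lemma locally_Rabs (x r : R) (P : R -> Prop) :
  0 < r -> (forall y, Rabs (y - x) < r -> P y) -> locally x P.
Proof. intros Hr HP. exists (mkposreal r Hr). exact HP. Qed.

Lemma locally_Rabs_inv (x : R) (P : R -> Prop) :
  locally x P -> exists r, 0 < r /\ forall y, Rabs (y - x) < r -> P y.
Proof. intros [r Hr]. exists r. split; [apply cond_pos | exact Hr]. Qed.

Lemma locally_comp_0 (u : R -> R) (P : R -> Prop) :
  continuous u 0 -> u 0 = 0 -> locally 0 P -> locally 0 (fun x => P (u x)).
Proof. intros Hu Hu0 HP. unfold continuous in Hu. rewrite Hu0 in Hu. exact (Hu P HP). Qed.

Fixpoint Cn (n : nat) (u : R -> R) : Prop :=
  match n with
  | O => True
  | S n => (forall x, ex_derive u x) /\ Cn n (Derive u)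
  end.

Lemma Derive_n_Sr (u : R -> R) (n : nat) (x : R) :
  Derive_n u (S n) x = Derive_n (Derive u) n x.
Proof. rewrite <- Nat.add_1_r, <- (Derive_n_comp u n 1). apply Derive_n_ext. reflexivity. Qed.

Lemma ex_derive_n_SSr (u : R -> R) (n : nat) (x : R) :
  ex_derive_n u (S (S n)) x <-> ex_derive_n (Derive u) (S n) x.
Proof.
  split; simpl; apply ex_derive_ext; intros y; [| symmetry]; apply Derive_n_Sr.
Qed.

Lemma smooth_S (u : R -> R) :
  smooth u <-> (forall x, ex_derive u x) /\ smooth (Derive u).
Proof.
  split.
  - intros Hu. split; [exact (Hu 1%nat) |].
    intros [|n] x; [exact I | exact (proj1 (ex_derive_n_SSr u n x) (Hu _ x))].
  - intros [H1 H2] [|[|n]] x;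
      [exact I | exact (H1 x) | exact (proj2 (ex_derive_n_SSr u n x) (H2 _ x))].
Qed.

Lemma smooth_Cn (u : R -> R) : smooth u <-> forall n, Cn n u.
Proof.
  split.
  - intros Hu n. revert u Hu. induction n as [|n IH]; intros u Hu; [exact I |].
    apply smooth_S in Hu as [H1 H2]. split; auto.
  - intros Hu n. revert u Hu. induction n as [|[|n] IH]; intros u Hu x;
      [exact I | exact (proj1 (Hu 1%nat) x) |].
    apply (proj2 (ex_derive_n_SSr u n x)), IH. intros m. exact (proj2 (Hu (S m))).
Qed.

Lemma Cn_ext (n : nat) (u v : R -> R) : (forall x, u x = v x) -> Cn n u -> Cn n v.
Proof. intros H. replace v with u by (apply functional_extensionality; exact H). auto. Qed.

Lemma Cn_pred (n : nat) (u : R -> R) : Cn (S n) u -> Cn n u.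
Proof.
  revert u; induction n as [|n IH]; intros u [H1 H2]; [exact I |].
  split; [exact H1 | exact (IH _ H2)].
Qed.

Lemma Cn_const (n : nat) (c : R) : Cn n (fun _ => c).
Proof.
  revert c; induction n as [|n IH]; intros c; [exact I |].
  split; [intros; apply ex_derive_const |].
  apply (Cn_ext n (fun _ => 0)); [intros x; symmetry; apply Derive_const | apply IH].
Qed.

Lemma Cn_id (n : nat) : Cn n (fun x => x).
Proof.
  destruct n; [exact I |]. split; [intros; apply ex_derive_id |].
  apply (Cn_ext n (fun _ => 1)); [intros x; symmetry; apply Derive_id | apply Cn_const].
Qed.

Lemma Cn_plus (n : nat) (u v : R -> R) : Cn n u -> Cn n v -> Cn n (fun x => u x + v x).
Proof.
  revert u v; induction n as [|n IH]; intros u v Hu Hv; [exact I |].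
  destruct Hu as [Hu1 Hu2], Hv as [Hv1 Hv2].
  split; [intros x; exact (ex_derive_plus u v x (Hu1 x) (Hv1 x)) |].
  apply (Cn_ext n (fun x => Derive u x + Derive v x)); [| auto].
  intros x. symmetry. apply Derive_plus; auto.
Qed.

Lemma Cn_mult (n : nat) (u v : R -> R) : Cn n u -> Cn n v -> Cn n (fun x => u x * v x).
Proof.
  revert u v; induction n as [|n IH]; intros u v Hu Hv; [exact I |].
  pose proof (Cn_pred _ _ Hu) as Hu'. pose proof (Cn_pred _ _ Hv) as Hv'.
  destruct Hu as [Hu1 Hu2], Hv as [Hv1 Hv2].
  split; [intros x; apply ex_derive_mult; auto |].
  apply (Cn_ext n (fun x => Derive u x * v x + u x * Derive v x)).
  - intros x. symmetry. apply Derive_mult; auto.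
  - apply Cn_plus; auto.
Qed.

Lemma Cn_comp (n : nat) (u v : R -> R) : Cn n u -> Cn n v -> Cn n (fun x => u (v x)).
Proof.
  revert u v; induction n as [|n IH]; intros u v Hu Hv; [exact I |].
  pose proof (Cn_pred _ _ Hu) as Hu'. pose proof (Cn_pred _ _ Hv) as Hv'.
  destruct Hu as [Hu1 Hu2], Hv as [Hv1 Hv2].
  split; [intros x; apply ex_derive_comp; auto |].
  apply (Cn_ext n (fun x => Derive v x * Derive u (v x))).
  - intros x. symmetry. apply Derive_comp; auto.
  - apply Cn_mult; auto.
Qed.

Lemma Cn_inv (n : nat) (w : R -> R) :
  (forall x, w x <> 0) -> Cn n w -> Cn n (fun x => / w x).
Proof.
  intros Hw0. revert w Hw0; induction n as [|n IH]; intros w Hw0 Hw; [exact I |].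
  pose proof (Cn_pred _ _ Hw) as Hw'. destruct Hw as [Hw1 Hw2].
  assert (Hd : forall x, is_derive (fun y => / w y) x (- Derive w x / (w x) ^ 2)).
  { intros x. apply is_derive_inv; auto. apply Derive_correct; auto. }
  split; [intros x; eexists; apply Hd |].
  apply (Cn_ext n (fun x => (-1 * Derive w x) * (/ w x * / w x))).
  - intros x. symmetry. apply is_derive_unique.
    replace (-1 * Derive w x * (/ w x * / w x)) with (- Derive w x / (w x) ^ 2)
      by (field; auto).
    apply Hd.
  - apply Cn_mult; [apply Cn_mult; [apply Cn_const | auto] | apply Cn_mult; auto].
Qed.

Lemma smooth_ex_derive (u : R -> R) (x : R) : smooth u -> ex_derive u x.
Proof. intros H; exact (H 1%nat x). Qed.

Lemma smooth_is_derive (u : R -> R) (x : R) : smooth u -> is_derive u x (Derive u x).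
Proof. intros H; apply Derive_correct, smooth_ex_derive, H. Qed.

Lemma smooth_continuous (u : R -> R) (x : R) : smooth u -> continuous u x.
Proof. intros H; exact (ex_derive_continuous u x (smooth_ex_derive u x H)). Qed.

Lemma smooth_Derive (u : R -> R) : smooth u -> smooth (Derive u).
Proof. intros H; exact (proj2 (proj1 (smooth_S u) H)). Qed.

Lemma smooth_ext (u v : R -> R) : (forall x, u x = v x) -> smooth u -> smooth v.
Proof. intros H. replace v with u by (apply functional_extensionality; exact H). auto. Qed.

Lemma smooth_const (c : R) : smooth (fun _ => c).
Proof. apply smooth_Cn; intros; apply Cn_const. Qed.

Lemma smooth_id : smooth (fun x => x).
Proof. apply smooth_Cn; intros; apply Cn_id. Qed.

Lemma smooth_plus (u v : R -> R) : smooth u -> smooth v -> smooth (fun x => u x + v x).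
Proof. rewrite !smooth_Cn; intros; apply Cn_plus; auto. Qed.

Lemma smooth_mult (u v : R -> R) : smooth u -> smooth v -> smooth (fun x => u x * v x).
Proof. rewrite !smooth_Cn; intros; apply Cn_mult; auto. Qed.

Lemma smooth_comp (u v : R -> R) : smooth u -> smooth v -> smooth (fun x => u (v x)).
Proof. rewrite !smooth_Cn; intros; apply Cn_comp; auto. Qed.

Lemma smooth_inv (w : R -> R) : (forall x, w x <> 0) -> smooth w -> smooth (fun x => / w x).
Proof. rewrite !smooth_Cn; intros; apply Cn_inv; auto. Qed.

Lemma smooth_scal (c : R) (u : R -> R) : smooth u -> smooth (fun x => c * u x).
Proof. apply smooth_mult, smooth_const. Qed.

Lemma smooth_minus (u v : R -> R) : smooth u -> smooth v -> smooth (fun x => u x - v x).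
Proof.
  intros Hu Hv. apply (smooth_ext (fun x => u x + -1 * v x)); [intros; ring |].
  apply smooth_plus, smooth_scal; auto.
Qed.

Lemma smooth_pow (u : R -> R) (k : nat) : smooth u -> smooth (fun x => u x ^ k).
Proof. intros H; induction k; simpl; [apply smooth_const | apply smooth_mult; auto]. Qed.

Lemma smooth_locally (u : R -> R) :
  (forall x, exists v, smooth v /\ locally x (fun y => v y = u y)) -> smooth u.
Proof.
  intros H n x. destruct (H x) as [v [Hv Hloc]].
  exact (ex_derive_n_ext_loc v u n x Hloc (Hv n x)).
Qed.

Lemma increasing_le (u : R -> R) : increasing u -> forall x y, x <= y -> u x <= u y.
Proof. intros H x y [Hxy | ->]; [left; auto | right; reflexivity]. Qed.

Lemma decreasing_le (u : R -> R) : decreasing u -> forall x y, x <= y -> u y <= u x.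
Proof. intros H x y [Hxy | ->]; [left; auto | right; reflexivity]. Qed.

Lemma increasing_sign (u : R -> R) (x : R) : increasing u -> u 0 = 0 ->
  (0 < x -> 0 < u x) /\ (0 <= x -> 0 <= u x) /\ (x < 0 -> u x < 0).
Proof.
  intros Hu Hu0. rewrite <- Hu0.
  split; [| split]; intros; [apply Hu | apply (increasing_le u Hu) | apply Hu]; lra.
Qed.

Lemma decreasing_sign (u : R -> R) (x : R) : decreasing u -> u 0 = 0 ->
  (0 < x -> u x < 0) /\ (0 <= x -> u x <= 0) /\ (x < 0 -> 0 < u x).
Proof.
  intros Hu Hu0. rewrite <- Hu0.
  split; [| split]; intros; [apply Hu | apply (decreasing_le u Hu) | apply Hu]; lra.
Qed.

Lemma is_inverse_sym (u v : R -> R) : is_inverse u v -> is_inverse v u.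
Proof. intros [H1 H2]; split; auto. Qed.

Lemma is_inverse_0 (u v : R -> R) : is_inverse u v -> u 0 = 0 -> v 0 = 0.
Proof. intros [H1 _] H0. rewrite <- H0 at 1. apply H1. Qed.

Lemma increasing_inverse (u v : R -> R) : increasing u -> is_inverse u v -> increasing v.
Proof.
  intros Hu [H1 H2] x y Hxy. destruct (Rtotal_order (v x) (v y)) as [h | [h | h]]; auto.
  - apply (f_equal u) in h. rewrite !H2 in h. lra.
  - apply Hu in h. rewrite !H2 in h. lra.
Qed.

Lemma decreasing_inverse (u v : R -> R) : decreasing u -> is_inverse u v -> decreasing v.
Proof.
  intros Hu [H1 H2] x y Hxy. destruct (Rtotal_order (v x) (v y)) as [h | [h | h]]; auto.
  - apply Hu in h. rewrite !H2 in h. lra.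
  - apply (f_equal u) in h. rewrite !H2 in h. lra.
Qed.

Lemma Derive_nonpos_of_decreasing (u : R -> R) (x : R) :
  decreasing u -> ex_derive u x -> Derive u x <= 0.
Proof.
  intros Hu Hx. pose proof (Derive_correct u x Hx) as H. apply is_derive_Reals in H.
  destruct (Rle_dec (Derive u x) 0) as [Hle | Hgt]; auto. exfalso.
  destruct (H (Derive u x / 2) ltac:(lra)) as [d Hd].
  pose proof (cond_pos d) as Hd0.
  specialize (Hd (d / 2) ltac:(lra) ltac:(rewrite Rabs_pos_eq; lra)).
  apply Rabs_def2 in Hd as [_ Hd].
  pose proof (Hu x (x + d / 2) ltac:(lra)) as Hlt.
  assert ((u (x + d / 2) - u x) / (d / 2) < 0).
  { apply Rmult_neg_pos; [lra | apply Rinv_0_lt_compat; lra]. }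
  lra.
Qed.

Lemma increasing_of_Derive_pos (u : R -> R) :
  smooth u -> (forall x, 0 < Derive u x) -> increasing u.
Proof.
  intros Hs Hpos x y Hxy.
  set (pr := fun t => ex_derive_Reals_0 u t (smooth_ex_derive u t Hs)).
  apply (derive_increasing_interv (x - 1) (y + 1) u pr); try lra.
  intros t _. unfold pr. rewrite Derive_Reals. auto.
Qed.

Lemma is_derive_inverse (u v : R -> R) (y : R) :
  (forall x, ex_derive u x) -> increasing u -> is_inverse u v -> Derive u (v y) <> 0 ->
  is_derive v y (/ Derive u (v y)).
Proof.
  intros Hex Hu Huv Hnz. pose proof (increasing_inverse u v Hu Huv) as Hv.
  destruct Huv as [Hvu Huv].
  assert (Hcont : continuity_pt v y).
  { apply (continuity_pt_recip_interv u v (v y - 1) (v y + 1)); try lra.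
    - intros; apply Hu; lra.
    - intros; apply Huv.
    - intros x H1 H2. apply (increasing_le v Hv) in H1, H2. rewrite Hvu in H1, H2. lra.
    - intros x _. apply continuity_pt_filterlim. exact (ex_derive_continuous u x (Hex x)).
    - rewrite <- (Huv y) at 2 3. split; apply Hu; lra. }
  assert (Hpr : forall a, v (y - 1) <= a <= v (y + 1) -> derivable_pt u a).
  { intros; apply ex_derive_Reals_0, Hex. }
  assert (Hvy : v (y - 1) <= v y <= v (y + 1)) by (split; left; apply Hv; lra).
  assert (E : derive_pt u (v y) (Hpr (v y) Hvy) = Derive u (v y)) by apply Derive_Reals.
  apply is_derive_Reals.
  replace (/ Derive u (v y)) with (1 / derive_pt u (v y) (Hpr (v y) Hvy))
    by (rewrite E; field; auto).
  apply (derivable_pt_lim_recip_interv u v (y - 1) (y + 1) y Hpr Hcont); try lra; auto.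
  intros; apply Huv.
Qed.

Lemma smooth_inverse (u v : R -> R) :
  smooth u -> increasing u -> is_inverse u v -> (forall x, Derive u x <> 0) -> smooth v.
Proof.
  intros Hs Hu Huv Hnz.
  assert (Hd : forall y, is_derive v y (/ Derive u (v y))).
  { intros y. apply is_derive_inverse; auto. intros; apply smooth_ex_derive, Hs. }
  apply smooth_Cn. intros n; induction n as [|n IH]; [exact I |].
  split; [intros y; eexists; apply Hd |].
  apply (Cn_ext n (fun y => / Derive u (v y))).
  - intros y. symmetry. apply is_derive_unique, Hd.
  - apply Cn_inv; [intros; apply Hnz |].
    apply Cn_comp; [apply smooth_Cn, smooth_Derive, Hs | exact IH].
Qed.

Lemma inverse_of_Derive_pos (u : R -> R) :
  smooth u -> (forall x, 0 < Derive u x) -> (forall y, exists a b, u a < y < u b) ->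
  exists v, smooth v /\ is_inverse u v.
Proof.
  intros Hs Hpos Hrange. pose proof (increasing_of_Derive_pos u Hs Hpos) as Hu.
  assert (Hsurj : forall y, exists x, u x = y).
  { intros y. destruct (Hrange y) as [a [b [Ha Hb]]].
    assert (Hab : a < b).
    { destruct (Rlt_le_dec a b) as [h | h]; auto.
      apply (increasing_le u Hu) in h. lra. }
    destruct (IVT (fun x => u x - y) a b) as [z [_ Hz]]; try lra.
    - apply continuity_minus; [| apply continuity_const; intros ? ?; reflexivity].
      intros x. apply continuity_pt_filterlim. exact (smooth_continuous u x Hs).
    - exists z; lra. }
  destruct (choice _ Hsurj) as [v Hv].
  assert (Huv : is_inverse u v).
  { split; [| exact Hv]. intros x.
    destruct (Rtotal_order (v (u x)) x) as [h | [h | h]]; auto;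
      apply Hu in h; rewrite Hv in h; lra. }
  exists v. split; [| exact Huv].
  apply (smooth_inverse u v); auto. intros x. specialize (Hpos x). lra.
Qed.

(** * Taylor coefficients at 0 *)

Definition fps_deriv (a : fps) : fps := fun n => INR (S n) * a (S n).

Lemma fps_deriv_S (a b : fps) (n : nat) : fps_deriv a n = fps_deriv b n -> a (S n) = b (S n).
Proof.
  unfold fps_deriv; intros H. apply (Rmult_eq_reg_l (INR (S n))); auto.
  apply not_0_INR; lia.
Qed.

Lemma fps_mul_ext (a b a' b' : fps) (n : nat) :
  (forall i, (i <= n)%nat -> a i = a' i) -> (forall i, (i <= n)%nat -> b i = b' i) ->
  fps_mul a b n = fps_mul a' b' n.
Proof. intros Ha Hb; apply sum_eq; intros i Hi. rewrite Ha, Hb by lia. reflexivity. Qed.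

Lemma fps_deriv_mul (a b : fps) (n : nat) :
  fps_deriv (fps_mul a b) n = fps_mul (fps_deriv a) b n + fps_mul a (fps_deriv b) n.
Proof.
  unfold fps_deriv, fps_mul. rewrite scal_sum.
  transitivity (sum_f_R0 (fun i => INR i * (a i * b (S n - i)%nat)) (S n) +
                sum_f_R0 (fun i => INR (S n - i) * (a i * b (S n - i)%nat)) (S n)).
  { rewrite <- plus_sum. apply sum_eq; intros i Hi.
    rewrite <- Rmult_plus_distr_r, <- plus_INR. replace (i + (S n - i))%nat with (S n) by lia.
    ring. }
  f_equal.
  - rewrite decomp_sum by lia. simpl pred. rewrite Rmult_0_l, Rplus_0_l.
    apply sum_eq; intros i Hi. replace (S n - S i)%nat with (n - i)%nat by lia. ring.
  - rewrite tech5, Nat.sub_diag, Rmult_0_l, Rplus_0_r.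
    apply sum_eq; intros i Hi. replace (S n - i)%nat with (S (n - i)) by lia. ring.
Qed.

Lemma sum_f_R0_single (a : nat -> R) (n m : nat) :
  (m <= n)%nat -> (forall i, (i <= n)%nat -> i <> m -> a i = 0) -> sum_f_R0 a n = a m.
Proof.
  induction n as [|n IH]; intros Hm H; simpl.
  - replace m with 0%nat by lia. reflexivity.
  - destruct (Nat.eq_dec m (S n)) as [-> | Hne].
    + rewrite sum_eq_R0; [ring |]. intros; apply H; lia.
    + rewrite IH, (H (S n)) by (lia || (intros; apply H; lia)). ring.
Qed.

Lemma fps_mul_X (a : fps) (n : nat) :
  fps_mul fps_X a n = match n with O => 0 | S m => a m end.
Proof.
  unfold fps_mul. destruct n as [|m]; [simpl; unfold fps_X; ring |].
  rewrite (sum_f_R0_single _ _ 1); [| lia |].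
  - unfold fps_X. replace (S m - 1)%nat with m by lia. ring.
  - intros [|[|i]] Hi Hne; unfold fps_X; [ring | lia | ring].
Qed.

Lemma fps_pow_X (k n : nat) : fps_pow fps_X k n = if Nat.eqb k n then 1 else 0.
Proof.
  revert n; induction k as [|k IH]; intros n; [destruct n; reflexivity |].
  simpl. rewrite fps_mul_X. destruct n; [reflexivity | apply IH].
Qed.

Lemma taylor0_0 (u : R -> R) : taylor0 u O = u 0.
Proof. unfold taylor0; simpl; field. Qed.

Lemma taylor0_Derive (u : R -> R) (n : nat) : taylor0 (Derive u) n = fps_deriv (taylor0 u) n.
Proof.
  unfold taylor0, fps_deriv. rewrite Derive_n_Sr, fact_simpl, mult_INR.
  field. split; [apply INR_fact_neq_0 | apply not_0_INR; lia].
Qed.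

Lemma taylor0_plus (u v : R -> R) (n : nat) : smooth u -> smooth v ->
  taylor0 (fun x => u x + v x) n = taylor0 u n + taylor0 v n.
Proof.
  intros Hu Hv. unfold taylor0.
  rewrite Derive_n_plus by (apply filter_forall; intros; apply Hu || apply Hv).
  field. apply INR_fact_neq_0.
Qed.

Lemma taylor0_scal (c : R) (u : R -> R) (n : nat) :
  taylor0 (fun x => c * u x) n = c * taylor0 u n.
Proof. unfold taylor0. rewrite Derive_n_scal_l. field. apply INR_fact_neq_0. Qed.

Lemma taylor0_const (c : R) (n : nat) :
  taylor0 (fun _ => c) n = match n with O => c | S _ => 0 end.
Proof.
  destruct n; [apply taylor0_0 |]. unfold taylor0. rewrite Derive_n_const.
  field. apply INR_fact_neq_0.
Qed.

Lemma taylor0_ext_loc (u v : R -> R) : locally 0 (fun x => u x = v x) -> taylor0 u = taylor0 v.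
Proof.
  intros H. apply functional_extensionality; intros n. unfold taylor0.
  f_equal. apply Derive_n_ext_loc, H.
Qed.

Lemma taylor0_id : taylor0 (fun x => x) = fps_X.
Proof.
  apply functional_extensionality; intros [|n]; [apply taylor0_0 |].
  apply fps_deriv_S. rewrite <- taylor0_Derive.
  rewrite (taylor0_ext_loc _ (fun _ => 1)) by (apply filter_forall; apply Derive_id).
  rewrite taylor0_const. unfold fps_deriv, fps_X. destruct n; simpl; ring.
Qed.

Lemma taylor0_mult (u v : R -> R) (n : nat) : smooth u -> smooth v ->
  taylor0 (fun x => u x * v x) n = fps_mul (taylor0 u) (taylor0 v) n.
Proof.
  revert u v; induction n as [|n IH]; intros u v Hu Hv.
  - rewrite !taylor0_0. unfold fps_mul; simpl. rewrite !taylor0_0. ring.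
  - apply fps_deriv_S. rewrite fps_deriv_mul, <- taylor0_Derive.
    rewrite (taylor0_ext_loc _ (fun x => Derive u x * v x + u x * Derive v x))
      by (apply filter_forall; intros; apply Derive_mult; apply smooth_ex_derive; auto).
    rewrite taylor0_plus by (apply smooth_mult; auto using smooth_Derive).
    rewrite !IH by auto using smooth_Derive.
    f_equal; apply fps_mul_ext; intros; auto using taylor0_Derive.
Qed.

Lemma taylor0_pow (u : R -> R) (k : nat) :
  smooth u -> taylor0 (fun x => u x ^ k) = fps_pow (taylor0 u) k.
Proof.
  intros Hu; induction k as [|k IH]; apply functional_extensionality; intros n; simpl.
  - apply taylor0_const.
  - rewrite taylor0_mult, IH by auto using smooth_pow. reflexivity.
Qed.

Lemma smooth_sum (c : nat -> R) (w : nat -> R -> R) (n : nat) :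
  (forall k, smooth (w k)) -> smooth (fun x => sum_f_R0 (fun k => c k * w k x) n).
Proof.
  intros H; induction n; simpl; [apply smooth_scal, H | apply smooth_plus, smooth_scal, H; auto].
Qed.

Lemma taylor0_sum (c : nat -> R) (w : nat -> R -> R) (n j : nat) : (forall k, smooth (w k)) ->
  taylor0 (fun x => sum_f_R0 (fun k => c k * w k x) n) j
  = sum_f_R0 (fun k => c k * taylor0 (w k) j) n.
Proof.
  intros H; induction n as [|n IH]; simpl; [apply taylor0_scal |].
  rewrite taylor0_plus; [| apply smooth_sum; auto | apply smooth_scal; auto].
  rewrite IH, taylor0_scal. reflexivity.
Qed.

Lemma taylor0_comp_flat (r b : R -> R) (N : nat) : smooth r -> smooth b -> b 0 = 0 ->
  (forall j, (j <= N)%nat -> taylor0 r j = 0) ->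
  forall j, (j <= N)%nat -> taylor0 (fun x => r (b x)) j = 0.
Proof.
  intros Hr Hb Hb0. revert r Hr; induction N as [|N IH]; intros r Hr Hflat [|j] Hj;
    try lia; try (rewrite taylor0_0, Hb0, <- taylor0_0; apply Hflat; lia).
  apply (fps_deriv_S _ (fun _ => 0)). unfold fps_deriv at 2. rewrite Rmult_0_r.
  rewrite <- taylor0_Derive.
  rewrite (taylor0_ext_loc _ (fun x => Derive b x * Derive r (b x)))
    by (apply filter_forall; intros; apply Derive_comp; apply smooth_ex_derive; auto).
  rewrite taylor0_mult by auto using smooth_Derive, smooth_comp.
  apply sum_eq_R0; intros i Hi. rewrite IH; auto using smooth_Derive; [ring | | lia].
  intros k Hk. rewrite taylor0_Derive. unfold fps_deriv. rewrite Hflat by lia. ring.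
Qed.

Lemma taylor0_comp (a b : R -> R) : smooth a -> smooth b -> b 0 = 0 ->
  taylor0 (fun x => a (b x)) = fps_comp (taylor0 a) (taylor0 b).
Proof.
  intros Ha Hb Hb0. apply functional_extensionality; intros n.
  (* split [a] into its Taylor polynomial of degree [n] and a remainder flat to order [n] *)
  pose (P := fun x => sum_f_R0 (fun k => taylor0 a k * (fun k x => x ^ k) k x) n).
  pose (r := fun x => a x + -1 * P x).
  assert (HP : smooth P) by (unfold P; apply smooth_sum; intros; apply smooth_pow, smooth_id).
  assert (Hr : smooth r) by (apply smooth_plus, smooth_scal; auto).
  assert (Hpow : forall k j, taylor0 (fun x => x ^ k) j = if Nat.eqb k j then 1 else 0).
  { intros k j. rewrite taylor0_pow, taylor0_id by apply smooth_id. apply fps_pow_X. }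
  assert (Hflat : forall j, (j <= n)%nat -> taylor0 r j = 0).
  { intros j Hj. unfold r. rewrite taylor0_plus, taylor0_scal by (auto; apply smooth_scal; auto).
    unfold P. rewrite taylor0_sum by (intros; apply smooth_pow, smooth_id).
    rewrite (sum_f_R0_single _ _ j Hj), Hpow, Nat.eqb_refl; [ring |].
    intros i Hi Hne. rewrite Hpow. apply Nat.eqb_neq in Hne. rewrite Hne. ring. }
  rewrite (taylor0_ext_loc _ (fun x => P (b x) + r (b x)))
    by (apply filter_forall; intros; unfold r; ring).
  rewrite taylor0_plus by (apply (smooth_comp P b) || apply (smooth_comp r b); auto).
  rewrite (taylor0_comp_flat r b n Hr Hb Hb0 Hflat n (le_n n)), Rplus_0_r.
  unfold P. rewrite taylor0_sum by (intros; apply smooth_pow; auto).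
  apply sum_eq; intros k Hk. rewrite taylor0_pow by auto. reflexivity.
Qed.

Lemma taylor0_inverse (u v : R -> R) : smooth u -> smooth v -> is_inverse u v -> u 0 = 0 ->
  fps_comp (taylor0 v) (taylor0 u) = fps_X /\ fps_comp (taylor0 u) (taylor0 v) = fps_X.
Proof.
  intros Hu Hv Huv Hu0. pose proof (is_inverse_0 u v Huv Hu0) as Hv0. destruct Huv.
  split; rewrite <- taylor0_comp, <- taylor0_id by assumption;
    apply taylor0_ext_loc, filter_forall; auto.
Qed.

Lemma taylor0_conjugate (f g h hinv : R -> R) :
  smooth g -> smooth h -> smooth hinv -> is_inverse h hinv -> g 0 = 0 -> h 0 = 0 ->
  locally 0 (fun x => h (f x) = g (h x)) ->
  taylor0 f = fps_comp (taylor0 hinv) (fps_comp (taylor0 g) (taylor0 h)).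
Proof.
  intros Hg Hh Hhinv [Hhh _] Hg0 Hh0 Hconj.
  assert (Hgh : smooth (fun x => g (h x))) by (apply smooth_comp; auto).
  assert (Hgh0 : g (h 0) = 0) by (rewrite Hh0; auto).
  rewrite <- (taylor0_comp g h), <- taylor0_comp by auto.
  apply taylor0_ext_loc. revert Hconj; apply filter_imp; intros x <-. auto.
Qed.

(** * A smooth step function *)

Inductive polynomial : (R -> R) -> Prop :=
  | polynomial_const (c : R) : polynomial (fun _ => c)
  | polynomial_plus (p q : R -> R) :
      polynomial p -> polynomial q -> polynomial (fun t => p t + q t)
  | polynomial_mul_id (p : R -> R) : polynomial p -> polynomial (fun t => t * p t).

Lemma polynomial_scal (c : R) (p : R -> R) : polynomial p -> polynomial (fun t => c * p t).
Proof.
  induction 1 as [d | p q _ IHp _ IHq | p _ IHp].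
  - apply polynomial_const.
  - replace (fun t => c * (p t + q t)) with (fun t => c * p t + c * q t)
      by (apply functional_extensionality; intros; ring).
    apply polynomial_plus; auto.
  - replace (fun t => c * (t * p t)) with (fun t => t * (c * p t))
      by (apply functional_extensionality; intros; ring).
    apply polynomial_mul_id; auto.
Qed.

Lemma polynomial_derive (p : R -> R) :
  polynomial p -> exists p', polynomial p' /\ forall t, is_derive p t (p' t).
Proof.
  induction 1 as [c | p q _ [p' [Hp' Hdp]] _ [q' [Hq' Hdq]] | p Hp [p' [Hp' Hdp]]].
  - exists (fun _ => 0). split; [apply polynomial_const | intros t; exact (is_derive_const c t)].
  - exists (fun t => p' t + q' t). split; [apply polynomial_plus; auto |].
    intros t. exact (is_derive_plus p q t _ _ (Hdp t) (Hdq t)).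
  - exists (fun t => p t + t * p' t). split; [apply polynomial_plus, polynomial_mul_id; auto |].
    intros t. replace (p t + t * p' t) with (1 * p t + t * p' t) by ring.
    exact (is_derive_mult (fun t => t) p t 1 (p' t) (is_derive_id t) (Hdp t) Rmult_comm).
Qed.

Lemma pow_mul_exp_neg_le (k : nat) (t : R) :
  0 < t -> t ^ k * exp (- t) <= INR (Factorial.fact (S k)) / t.
Proof.
  intros Ht. pose proof (INR_fact_lt_0 (S k)) as HF. pose proof (exp_pos t) as He.
  assert (Hexp : t ^ S k / INR (Factorial.fact (S k)) <= exp t).
  { eapply Rle_trans; [| apply (exp_ge_taylor t (S k)); lra].
    rewrite tech5.
    assert (0 <= sum_f_R0 (fun j => t ^ j / INR (Factorial.fact j)) k); [| lra].
    apply cond_pos_sum; intros j.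
    apply Rdiv_le_0_compat; [apply pow_le; lra | apply INR_fact_lt_0]. }
  rewrite exp_Ropp. simpl in Hexp.
  apply (Rmult_le_reg_r (exp t * t / INR (Factorial.fact (S k)))).
  { apply Rdiv_lt_0_compat; [apply Rmult_lt_0_compat |]; lra. }
  replace (t ^ k * / exp t * (exp t * t / INR (Factorial.fact (S k))))
    with (t * t ^ k / INR (Factorial.fact (S k))) by (field; lra).
  replace (INR (Factorial.fact (S k)) / t * (exp t * t / INR (Factorial.fact (S k))))
    with (exp t) by (field; lra).
  exact Hexp.
Qed.

Lemma polynomial_exp_decay (p : R -> R) : polynomial p ->
  forall k, exists M, forall t, 1 <= t -> Rabs (t ^ k * p t * exp (- t)) <= M / t.
Proof.
  induction 1 as [c | p q _ IHp _ IHq | p _ IHp]; intros k.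
  - exists (Rabs c * INR (Factorial.fact (S k))). intros t Ht.
    pose proof (pow_mul_exp_neg_le k t ltac:(lra)) as Hle.
    assert (0 <= t ^ k * exp (- t)).
    { apply Rmult_le_pos; [apply pow_le; lra | left; apply exp_pos]. }
    replace (t ^ k * c * exp (- t)) with (c * (t ^ k * exp (- t))) by ring.
    rewrite Rabs_mult, (Rabs_pos_eq (t ^ k * exp (- t))) by auto.
    unfold Rdiv. rewrite Rmult_assoc.
    apply Rmult_le_compat_l; [apply Rabs_pos | exact Hle].
  - destruct (IHp k) as [M1 H1], (IHq k) as [M2 H2]. exists (M1 + M2). intros t Ht.
    replace (t ^ k * (p t + q t) * exp (- t))
      with (t ^ k * p t * exp (- t) + t ^ k * q t * exp (- t)) by ring.
    eapply Rle_trans; [apply Rabs_triang |].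
    specialize (H1 t Ht); specialize (H2 t Ht). unfold Rdiv in *. lra.
  - destruct (IHp (S k)) as [M H]. exists M. intros t Ht.
    replace (t ^ k * (t * p t) * exp (- t)) with (t ^ S k * p t * exp (- t)) by (simpl; ring).
    auto.
Qed.

Definition flat (q : R -> R) (x : R) : R := if Rlt_dec 0 x then q (/ x) * exp (- / x) else 0.

Lemma flat_nonpos (q : R -> R) (x : R) : x <= 0 -> flat q x = 0.
Proof. intros H; unfold flat. destruct (Rlt_dec 0 x); [lra | reflexivity]. Qed.

Lemma flat_pos (q : R -> R) (x : R) : 0 < x -> flat q x = q (/ x) * exp (- / x).
Proof. intros H; unfold flat. destruct (Rlt_dec 0 x); [reflexivity | lra]. Qed.

Lemma is_derive_flat_0 (q : R -> R) : polynomial q -> is_derive (flat q) 0 0.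
Proof.
  intros Hq. apply is_derive_Reals. intros eps Heps.
  destruct (polynomial_exp_decay q Hq 1) as [M HM].
  assert (Hd : 0 < Rmin 1 (eps / (Rabs M + 1))).
  { apply Rmin_pos; [lra | apply Rdiv_lt_0_compat; [lra | pose proof (Rabs_pos M); lra]]. }
  exists (mkposreal _ Hd). intros h Hh0 Hh. simpl in Hh.
  pose proof (Rmin_l 1 (eps / (Rabs M + 1))) as Hd1.
  pose proof (Rmin_r 1 (eps / (Rabs M + 1))) as Hd2.
  rewrite Rplus_0_l, (flat_nonpos q 0), Rminus_0_r, Rminus_0_r by lra.
  destruct (Rle_lt_dec h 0) as [Hneg | Hpos].
  - rewrite flat_nonpos by lra. unfold Rdiv. rewrite Rmult_0_l, Rabs_R0. exact Heps.
  - rewrite Rabs_pos_eq in Hh by lra. rewrite flat_pos by lra.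
    assert (Ht : 1 <= / h) by (rewrite <- Rinv_1; apply Rinv_le_contravar; lra).
    specialize (HM (/ h) Ht). replace (M / / h) with (M * h) in HM by (field; lra).
    replace (q (/ h) * exp (- / h) / h) with ((/ h) ^ 1 * q (/ h) * exp (- / h))
      by (simpl; field; lra).
    apply (Rle_lt_trans _ (M * h)); [exact HM |].
    assert (h * (Rabs M + 1) < eps) by (apply Rlt_div_r; pose proof (Rabs_pos M); lra).
    pose proof (Rle_abs M). nra.
Qed.

Lemma is_derive_flat (q : R -> R) : polynomial q ->
  exists q', polynomial q' /\ forall x, is_derive (flat q) x (flat q' x).
Proof.
  intros Hq. destruct (polynomial_derive q Hq) as [dq [Hdq Hd]].
  exists (fun t => t * (t * (q t + -1 * dq t))).
  split; [repeat constructor; auto; apply polynomial_scal, Hdq |].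
  intros x. destruct (Rtotal_order x 0) as [Hx | [-> | Hx]].
  - rewrite flat_nonpos by lra.
    apply (is_derive_ext_loc (fun _ => 0)); [| exact (is_derive_const 0 x)].
    apply (filter_imp (fun y => y < 0)); [intros y Hy; symmetry; apply flat_nonpos; lra |].
    apply open_lt; exact Hx.
  - rewrite flat_nonpos by lra. apply is_derive_flat_0, Hq.
  - rewrite flat_pos by lra.
    apply (is_derive_ext_loc (fun y => q (/ y) * exp (- / y))).
    { apply (filter_imp (fun y => 0 < y)); [intros y Hy; symmetry; apply flat_pos, Hy |].
      apply open_gt; exact Hx. }
    assert (H1 : is_derive (fun y => q (/ y)) x (- / x ^ 2 * dq (/ x))).
    { apply (is_derive_comp q Rinv x (dq (/ x)) (- / x ^ 2)); [apply Hd |].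
      replace (- / x ^ 2) with (- (1) / x ^ 2) by (field; lra).
      apply (is_derive_inv (fun y => y) x 1); [exact (is_derive_id x) | lra]. }
    assert (H2 : is_derive (fun y => exp (- / y)) x (exp (- / x) * / x ^ 2)).
    { auto_derive; [lra | field; lra]. }
    replace (/ x * (/ x * (q (/ x) + -1 * dq (/ x))) * exp (- / x))
      with (- / x ^ 2 * dq (/ x) * exp (- / x) + q (/ x) * (exp (- / x) * / x ^ 2))
      by (field; lra).
    exact (is_derive_mult _ _ x _ _ H1 H2 Rmult_comm).
Qed.

Lemma smooth_flat (q : R -> R) : polynomial q -> smooth (flat q).
Proof.
  intros Hq. apply smooth_Cn. intros n. revert q Hq.
  induction n as [|n IH]; intros q Hq; [exact I |].
  destruct (is_derive_flat q Hq) as [q' [Hq' Hd]].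
  split; [intros x; eexists; apply Hd |].
  apply (Cn_ext n (flat q')); [intros x; symmetry; apply is_derive_unique, Hd | auto].
Qed.

Definition step (t : R) : R :=
  flat (fun _ => 1) t / (flat (fun _ => 1) t + flat (fun _ => 1) (1 - t)).

Lemma flat_one_pos (x : R) : 0 < x -> 0 < flat (fun _ => 1) x.
Proof. intros H. rewrite flat_pos, Rmult_1_l by exact H. apply exp_pos. Qed.

Lemma flat_one_nonneg (x : R) : 0 <= flat (fun _ => 1) x.
Proof.
  destruct (Rlt_le_dec 0 x);
    [left; apply flat_one_pos | right; symmetry; apply flat_nonpos]; auto.
Qed.

Lemma step_denominator_pos (t : R) : 0 < flat (fun _ => 1) t + flat (fun _ => 1) (1 - t).
Proof.
  pose proof (flat_one_nonneg t). pose proof (flat_one_nonneg (1 - t)).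
  destruct (Rlt_le_dec 0 t) as [Ht | Ht];
    [pose proof (flat_one_pos t Ht) | pose proof (flat_one_pos (1 - t) ltac:(lra))]; lra.
Qed.

Lemma smooth_step : smooth step.
Proof.
  pose proof (smooth_flat _ (polynomial_const 1)) as Hflat.
  apply smooth_mult; [exact Hflat |].
  apply smooth_inv; [intros t; pose proof (step_denominator_pos t); lra |].
  apply smooth_plus; [exact Hflat |].
  apply (smooth_comp _ (fun t => 1 - t) Hflat), smooth_minus;
    [apply smooth_const | apply smooth_id].
Qed.

Lemma step_le_0 (t : R) : t <= 0 -> step t = 0.
Proof. intros H; unfold step. rewrite (flat_nonpos _ t) by exact H. unfold Rdiv; ring. Qed.

Lemma step_ge_1 (t : R) : 1 <= t -> step t = 1.
Proof.
  intros H; unfold step. rewrite (flat_nonpos _ (1 - t)), Rplus_0_r by lra.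
  pose proof (flat_one_pos t ltac:(lra)). field. lra.
Qed.

Lemma step_range (t : R) : 0 <= step t <= 1.
Proof.
  unfold step. pose proof (step_denominator_pos t). pose proof (flat_one_nonneg t).
  pose proof (flat_one_nonneg (1 - t)).
  split; [apply Rdiv_le_0_compat; lra |].
  apply Rle_div_l; lra.
Qed.

(** * Extending a local diffeomorphism by the identity *)

Lemma continuous_ball (u : R -> R) (x e : R) : continuous u x -> 0 < e ->
  exists r, 0 < r /\ forall y, Rabs (y - x) < r -> Rabs (u y - u x) < e.
Proof.
  intros Hu He. apply locally_Rabs_inv.
  exact (Hu (fun z => Rabs (z - u x) < e) (locally_Rabs _ _ _ He (fun z Hz => Hz))).
Qed.

Lemma near_identity_bound (l : R -> R) (r eta : R) : smooth l -> l 0 = 0 ->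
  (forall x, Rabs x < r -> Rabs (Derive l x - 1) <= eta) ->
  forall x, Rabs x < r -> Rabs (l x - x) <= eta * Rabs x.
Proof.
  intros Hl Hl0 Hd x Hx.
  destruct (MVT_cor4 (fun t => l t - t) (fun t => Derive l t - 1) 0 (Rabs x)) with (b := x)
    as [c [Hc1 Hc2]].
  - intros c _. apply (is_derive_minus l (fun t => t));
      [apply smooth_is_derive, Hl | exact (is_derive_id _)].
  - rewrite Rminus_0_r; lra.
  - rewrite Hl0, !Rminus_0_r in Hc1. rewrite !Rminus_0_r in Hc2.
    rewrite Hc1, Rabs_mult. apply Rmult_le_compat_r; [apply Rabs_pos |]. apply Hd. lra.
Qed.

Lemma Derive_blend_pos (chi l : R -> R) (K eta x : R) :
  smooth chi -> smooth l -> 0 <= chi x <= 1 -> Rabs (x * Derive chi x) <= K ->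
  Rabs (l x - x) <= eta * Rabs x -> Rabs (Derive l x - 1) <= eta -> eta * (K + 1) < 1 ->
  0 < Derive (fun y => y + chi y * (l y - y)) x.
Proof.
  intros Hchi Hl Hrange HK Hlx Hdl Heta.
  assert (Hder : Derive (fun y => y + chi y * (l y - y)) x
                 = 1 + (Derive chi x * (l x - x) + chi x * (Derive l x - 1))).
  { apply is_derive_unique. auto_derive; [split; [| split]; auto using smooth_ex_derive |].
    change (fun y => chi y) with chi; change (fun y => l y) with l. ring. }
  rewrite Hder.
  assert (Heta0 : 0 <= eta) by (pose proof (Rabs_pos (Derive l x - 1)); lra).
  assert (H1 : Rabs (Derive chi x * (l x - x)) <= eta * K).
  { rewrite Rabs_mult. apply (Rle_trans _ (Rabs (Derive chi x) * (eta * Rabs x))).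
    - apply Rmult_le_compat_l; [apply Rabs_pos | exact Hlx].
    - replace (Rabs (Derive chi x) * (eta * Rabs x)) with (eta * Rabs (x * Derive chi x))
        by (rewrite Rabs_mult; ring).
      apply Rmult_le_compat_l; auto. }
  assert (H2 : Rabs (chi x * (Derive l x - 1)) <= eta).
  { rewrite Rabs_mult, (Rabs_pos_eq (chi x)) by lra.
    apply (Rle_trans _ (1 * eta)); [apply Rmult_le_compat; try lra; apply Rabs_pos | lra]. }
  apply Rabs_le_between in H1, H2. lra.
Qed.

Definition cutoff (d x : R) : R := step (2 * (1 - (x / d) ^ 2)).

Lemma smooth_cutoff (d : R) : smooth (cutoff d).
Proof.
  apply (smooth_comp step (fun x => 2 * (1 - (x / d) ^ 2)) smooth_step).
  apply smooth_scal, smooth_minus; [apply smooth_const |].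
  apply smooth_pow, (smooth_ext (fun x => / d * x)); [intros; unfold Rdiv; ring |].
  apply smooth_scal, smooth_id.
Qed.

Lemma cutoff_range (d x : R) : 0 <= cutoff d x <= 1.
Proof. apply step_range. Qed.

Lemma sqr_div_bounds (d x c : R) : 0 < d -> 0 <= c ->
  (Rabs x <= c * d -> (x / d) ^ 2 <= c ^ 2) /\ (c * d <= Rabs x -> c ^ 2 <= (x / d) ^ 2).
Proof.
  intros Hd Hc. rewrite <- (pow2_abs (x / d)).
  unfold Rdiv; rewrite Rabs_mult, Rabs_inv, (Rabs_pos_eq d) by lra.
  split; intros H.
  - apply pow_incr. split; [| apply Rle_div_l; lra].
    apply Rmult_le_pos; [apply Rabs_pos | left; apply Rinv_0_lt_compat; lra].
  - apply pow_incr. split; [lra |]. apply Rle_div_r; lra.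
Qed.

Lemma cutoff_near (d x : R) : 0 < d -> Rabs x <= d / 2 -> cutoff d x = 1.
Proof.
  intros Hd Hx. apply step_ge_1.
  pose proof (proj1 (sqr_div_bounds d x (/ 2) Hd ltac:(lra)) ltac:(lra)). simpl in *. lra.
Qed.

Lemma cutoff_far (d x : R) : 0 < d -> d <= Rabs x -> cutoff d x = 0.
Proof.
  intros Hd Hx. apply step_le_0.
  pose proof (proj2 (sqr_div_bounds d x 1 Hd ltac:(lra)) ltac:(lra)). simpl in *. lra.
Qed.

(* Uniform in [d]: [x * Derive (cutoff d) x] does not change when [x] and [d] are rescaled. *)
Lemma cutoff_Derive_bound :
  exists K, forall d x, 0 < d -> Rabs x <= d -> Rabs (x * Derive (cutoff d) x) <= K.
Proof.
  destruct (continuity_ab_maj (fun s => Rabs (Derive step s)) 0 2) as [s0 [Hs0 _]]; [lra | |].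
  { intros s _. apply continuity_pt_filterlim, (continuous_comp (Derive step) Rabs).
    - apply smooth_continuous, smooth_Derive, smooth_step.
    - apply continuous_Rabs. }
  exists (4 * Rabs (Derive step s0)). intros d x Hd Hx.
  pose proof (proj1 (sqr_div_bounds d x 1 Hd ltac:(lra)) ltac:(lra)) as Hsq. simpl in Hsq.
  assert (Hder : Derive (cutoff d) x
                 = (- 4 * (x / d) / d) * Derive step (2 * (1 - (x / d) ^ 2))).
  { apply is_derive_unique, (is_derive_comp step (fun y => 2 * (1 - (y / d) ^ 2))).
    - apply smooth_is_derive, smooth_step.
    - auto_derive; [lra | field; lra]. }
  rewrite Hder.
  set (s := 2 * (1 - (x / d) ^ 2)).
  replace (x * (-4 * (x / d) / d * Derive step s)) with (- (4 * ((x / d) ^ 2 * Derive step s)))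
    by (field; lra).
  assert (Hs : 0 <= s <= 2) by (unfold s; pose proof (pow2_ge_0 (x / d)); simpl in *; lra).
  pose proof (Hs0 s Hs). pose proof (Rabs_pos (Derive step s)). pose proof (pow2_ge_0 (x / d)).
  rewrite Rabs_Ropp, !Rabs_mult, (Rabs_pos_eq 4), (Rabs_pos_eq ((x / d) ^ 2)) by lra.
  simpl in *. nra.
Qed.

Lemma locally_Rabs_gt (d x : R) : d < Rabs x -> locally x (fun y => d < Rabs y).
Proof.
  intros Hx. apply (locally_Rabs x (Rabs x - d)); [lra |]. intros y Hy.
  pose proof (Rabs_triang_inv x y) as H. rewrite Rabs_minus_sym in H. lra.
Qed.

Lemma local_diffeo_extension (l : R -> R) (eps : R) :
  smooth l -> l 0 = 0 -> Derive l 0 = 1 -> 0 < eps ->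
  exists d h, 0 < d < eps /\ smooth h /\ (forall x, 0 < Derive h x) /\
    (forall x, d <= Rabs x -> h x = x) /\ locally 0 (fun x => h x = l x).
Proof.
  intros Hl Hl0 Hl1 Heps.
  destruct cutoff_Derive_bound as [K HK].
  assert (HK0 : 0 <= K).
  { specialize (HK 1 0). rewrite Rmult_0_l, Rabs_R0 in HK. apply HK; rewrite ?Rabs_R0; lra. }
  set (eta := / (2 * (K + 1))).
  assert (Heta : 0 < eta) by (apply Rinv_0_lt_compat; lra).
  assert (Heta1 : eta * (K + 1) < 1) by (unfold eta; field_simplify; lra).
  destruct (continuous_ball (Derive l) 0 eta (smooth_continuous _ 0 (smooth_Derive l Hl)) Heta)
    as [r [Hr Hdl]].
  rewrite Hl1 in Hdl.
  assert (Hdl' : forall x, Rabs x < r -> Rabs (Derive l x - 1) <= eta).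
  { intros x Hx. left. apply Hdl. rewrite Rminus_0_r. exact Hx. }
  set (d := Rmin (r / 2) (eps / 2)).
  assert (Hd : 0 < d) by (apply Rmin_pos; lra).
  assert (Hdr : d < r) by (unfold d; pose proof (Rmin_l (r / 2) (eps / 2)); lra).
  assert (Hde : d < eps) by (unfold d; pose proof (Rmin_r (r / 2) (eps / 2)); lra).
  exists d, (fun x => x + cutoff d x * (l x - x)).
  split; [lra | split; [| split; [| split]]].
  - apply smooth_plus, smooth_mult, smooth_minus; auto using smooth_id, smooth_cutoff.
  - intros x. destruct (Rle_lt_dec (Rabs x) d) as [Hx | Hx].
    + apply (Derive_blend_pos (cutoff d) l K eta x); auto using smooth_cutoff, cutoff_range.
      * apply (near_identity_bound l r); auto. lra.
      * apply Hdl'. lra.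
    + rewrite (Derive_ext_loc _ (fun y => y)), Derive_id; [lra |].
      apply (filter_imp (fun y => d < Rabs y)); [| apply locally_Rabs_gt, Hx].
      intros y Hy. rewrite cutoff_far by lra. ring.
  - intros x Hx. rewrite cutoff_far by lra. ring.
  - apply (locally_Rabs 0 (d / 2)); [lra |]. intros y Hy. rewrite Rminus_0_r in Hy.
    rewrite cutoff_near by lra. ring.
Qed.

(** * Involutions are locally conjugate *)

Definition linearizer (u : R -> R) (x : R) : R := (x - u x) / 2.

Lemma linearizer_involution (u : R -> R) (x : R) :
  u (u x) = x -> linearizer u (u x) = - linearizer u x.
Proof. intros H; unfold linearizer; rewrite H; field. Qed.

Lemma smooth_linearizer (u : R -> R) : smooth u -> smooth (linearizer u).
Proof.
  intros Hu. apply (smooth_ext (fun x => / 2 * (x - u x))).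
  - intros; unfold linearizer, Rdiv; ring.
  - apply smooth_scal, smooth_minus; auto using smooth_id.
Qed.

Lemma Derive_linearizer (u : R -> R) (x : R) :
  smooth u -> Derive (linearizer u) x = (1 - Derive u x) / 2.
Proof.
  intros Hu. apply is_derive_unique. unfold linearizer.
  auto_derive; [apply smooth_ex_derive, Hu |]. change (fun y => u y) with u. field.
Qed.

Lemma Derive_linearizer_pos (u : R -> R) (x : R) :
  smooth u -> decreasing u -> 0 < Derive (linearizer u) x.
Proof.
  intros Hu Hdec. rewrite Derive_linearizer by exact Hu.
  pose proof (Derive_nonpos_of_decreasing u x Hdec (smooth_ex_derive u x Hu)). lra.
Qed.

Lemma linearizer_inverse (u : R -> R) : smooth u -> decreasing u -> u 0 = 0 ->
  exists v, smooth v /\ is_inverse (linearizer u) v.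
Proof.
  intros Hu Hdec Hu0.
  apply inverse_of_Derive_pos; auto using smooth_linearizer, Derive_linearizer_pos.
  intros y. pose proof (Rabs_pos y). pose proof (Rle_abs y). pose proof (Rle_abs (- y)).
  rewrite Rabs_Ropp in *.
  exists (- 2 * Rabs y - 1), (2 * Rabs y + 1). unfold linearizer.
  pose proof (Hdec (- 2 * Rabs y - 1) 0 ltac:(lra)).
  pose proof (Hdec 0 (2 * Rabs y + 1) ltac:(lra)). lra.
Qed.

Lemma Derive_local_involution (u : R -> R) : smooth u -> decreasing u -> u 0 = 0 ->
  locally 0 (fun x => u (u x) = x) -> Derive u 0 = -1.
Proof.
  intros Hu Hdec Hu0 Hinv.
  assert (H : Derive u 0 * Derive u 0 = 1).
  { transitivity (Derive (fun x => u (u x)) 0).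
    - rewrite (Derive_comp u u 0) by (apply smooth_ex_derive, Hu). rewrite Hu0. reflexivity.
    - transitivity (Derive (fun x => x) 0); [apply Derive_ext_loc, Hinv | apply Derive_id]. }
  pose proof (Derive_nonpos_of_decreasing u 0 Hdec (smooth_ex_derive u 0 Hu)). nra.
Qed.

Lemma local_conjugacy (f g : R -> R) :
  smooth f -> smooth g -> decreasing f -> decreasing g -> f 0 = 0 -> g 0 = 0 ->
  locally 0 (fun x => f (f x) = x) -> locally 0 (fun x => g (g x) = x) ->
  exists l, smooth l /\ l 0 = 0 /\ Derive l 0 = 1 /\ locally 0 (fun x => l (f x) = g (l x)).
Proof.
  intros Hf Hg Hfdec Hgdec Hf0 Hg0 Hfinv Hginv.
  destruct (linearizer_inverse g Hg Hgdec Hg0) as [v [Hv Hlv]].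
  assert (Hlf0 : linearizer f 0 = 0) by (unfold linearizer; rewrite Hf0; field).
  assert (Hv0 : v 0 = 0).
  { apply (is_inverse_0 (linearizer g)); [exact Hlv | unfold linearizer; rewrite Hg0; field]. }
  pose (l := fun x => v (linearizer f x)).
  assert (Hl : smooth l) by (unfold l; apply smooth_comp; auto using smooth_linearizer).
  assert (Hl0 : l 0 = 0) by (unfold l; rewrite Hlf0; exact Hv0).
  exists l. split; [exact Hl | split; [exact Hl0 | split]].
  - assert (Hlg : increasing (linearizer g)).
    { apply increasing_of_Derive_pos; auto using smooth_linearizer, Derive_linearizer_pos. }
    assert (Hv' : is_derive v 0 (/ Derive (linearizer g) 0)).
    { rewrite <- Hv0 at 2. apply is_derive_inverse; auto; [| rewrite Hv0].
      - intros; apply smooth_ex_derive, smooth_linearizer, Hg.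
      - pose proof (Derive_linearizer_pos g 0 Hg Hgdec). lra. }
    unfold l. rewrite Derive_comp by (apply smooth_ex_derive; auto using smooth_linearizer).
    rewrite Hlf0, (is_derive_unique _ _ _ Hv'), !Derive_linearizer by auto.
    rewrite (Derive_local_involution f), (Derive_local_involution g) by auto. field.
  - pose proof (locally_comp_0 l _ (smooth_continuous l 0 Hl) Hl0 Hginv) as Hlg.
    apply (filter_imp (fun x => f (f x) = x /\ g (g (l x)) = l x));
      [| apply filter_and; auto].
    intros x [Hfx Hgx]. destruct Hlv as [Hvl Hlv].
    assert (E : linearizer g (l x) = linearizer f x) by apply Hlv.
    unfold l at 1. rewrite <- (Hvl (g (l x))).
    rewrite linearizer_involution, linearizer_involution, E; auto.
Qed.

(** * From local to global conjugacy *)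

Lemma locally_conjugacy_ext (f g l h : R -> R) : continuous f 0 -> f 0 = 0 ->
  locally 0 (fun x => h x = l x) -> locally 0 (fun x => l (f x) = g (l x)) ->
  locally 0 (fun x => h (f x) = g (h x)).
Proof.
  intros Hf Hf0 Hhl Hconj.
  pose proof (locally_comp_0 f _ Hf Hf0 Hhl) as Hhlf.
  apply (filter_imp (fun x => (h x = l x /\ h (f x) = l (f x)) /\ l (f x) = g (l x)));
    [| repeat apply filter_and; auto].
  intros x [[E1 E2] E3]. congruence.
Qed.

Lemma locally_conjugacy_inverse (f g h hinv : R -> R) :
  is_inverse h hinv -> continuous hinv 0 -> hinv 0 = 0 ->
  locally 0 (fun x => h (f x) = g (h x)) -> locally 0 (fun x => hinv (g x) = f (hinv x)).
Proof.
  intros [Hhh Hhh'] Hc Hhinv0 Hconj.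
  generalize (locally_comp_0 hinv _ Hc Hhinv0 Hconj). apply filter_imp.
  intros x E. rewrite Hhh' in E. rewrite <- E. apply Hhh.
Qed.

Lemma commute_with_local_identity (F h : R -> R) (eps d : R) :
  increasing F -> (forall x, Rabs x < eps -> F x = x) ->
  increasing h -> (forall x, d <= Rabs x -> h x = x) -> 0 < d < eps / 2 ->
  forall x, h (F x) = F (h x).
Proof.
  intros HF Hfix Hh Hid Hd x.
  assert (Hhd : h d = d /\ h (- d) = - d).
  { split; apply Hid; rewrite ?Rabs_Ropp, Rabs_pos_eq; lra. }
  assert (HFe : F (eps / 2) = eps / 2 /\ F (- (eps / 2)) = - (eps / 2)).
  { split; apply Hfix; rewrite ?Rabs_Ropp, Rabs_pos_eq; lra. }
  destruct (Rlt_le_dec (Rabs x) eps) as [Hx | Hx].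
  - rewrite (Hfix x Hx). symmetry. apply Hfix.
    destruct (Rle_lt_dec d (Rabs x)) as [Hdx | Hdx]; [rewrite Hid; auto |].
    apply Rabs_def2 in Hdx. pose proof (Hh (- d) x). pose proof (Hh x d).
    apply Rabs_def1; lra.
  - (* [F] maps [|x| >= eps] into [|y| >= eps / 2 > d], where [h] is the identity *)
    rewrite (Hid x) by lra. apply Hid.
    destruct (Rle_lt_dec 0 x).
    + rewrite Rabs_pos_eq in Hx by lra. pose proof (HF (eps / 2) x ltac:(lra)).
      rewrite Rabs_pos_eq; lra.
    + rewrite Rabs_left in Hx by lra. pose proof (HF x (- (eps / 2)) ltac:(lra)).
      rewrite Rabs_left; lra.
Qed.

(* On the negative half-line, [h] is transported by [f] and [g], which swap the half-lines. *)
Definition glue (f g h ginv : R -> R) (x : R) : R :=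
  if Rle_dec 0 x then h x else ginv (h (f x)).

Lemma glue_cancel (f g h finv ginv hinv : R -> R) :
  decreasing f -> f 0 = 0 -> increasing h -> h 0 = 0 -> decreasing ginv -> ginv 0 = 0 ->
  is_inverse f finv -> is_inverse g ginv -> is_inverse h hinv ->
  forall x, glue g f hinv finv (glue f g h ginv x) = x.
Proof.
  intros Hf Hf0 Hh Hh0 Hgi Hgi0 [Hff _] [_ Hgg] [Hhh _] x. unfold glue.
  destruct (Rle_dec 0 x) as [Hx | Hx].
  - destruct (Rle_dec 0 (h x)) as [Hhx | Hhx]; [apply Hhh |].
    exfalso. apply Hhx, (increasing_sign h x Hh Hh0), Hx.
  - pose proof (proj2 (proj2 (decreasing_sign f x Hf Hf0)) ltac:(lra)) as Hfx.
    pose proof (proj1 (increasing_sign h _ Hh Hh0) Hfx) as Hhfx.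
    pose proof (proj1 (decreasing_sign ginv _ Hgi Hgi0) Hhfx) as Hk.
    destruct (Rle_dec 0 (ginv (h (f x)))); [lra |]. rewrite Hgg, Hhh. apply Hff.
Qed.

Lemma glue_increasing (f g h ginv : R -> R) :
  decreasing f -> f 0 = 0 -> increasing h -> h 0 = 0 -> decreasing ginv -> ginv 0 = 0 ->
  increasing (glue f g h ginv).
Proof.
  intros Hf Hf0 Hh Hh0 Hgi Hgi0 x y Hxy. unfold glue.
  destruct (Rle_dec 0 x) as [Hx | Hx], (Rle_dec 0 y) as [Hy | Hy]; try lra.
  - apply Hh, Hxy.
  - pose proof (proj2 (proj2 (decreasing_sign f x Hf Hf0)) ltac:(lra)) as Hfx.
    pose proof (proj1 (increasing_sign h _ Hh Hh0) Hfx) as Hhfx.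
    pose proof (proj1 (decreasing_sign ginv _ Hgi Hgi0) Hhfx).
    pose proof (proj1 (proj2 (increasing_sign h y Hh Hh0)) Hy). lra.
  - apply Hgi, Hh, Hf, Hxy.
Qed.

Lemma smooth_glue (f g h ginv : R -> R) :
  smooth f -> smooth h -> smooth ginv -> is_inverse g ginv ->
  locally 0 (fun x => h (f x) = g (h x)) -> smooth (glue f g h ginv).
Proof.
  intros Hf Hh Hgi [Hgg _] Hconj.
  destruct (locally_Rabs_inv 0 _ Hconj) as [rho [Hrho Hloc]].
  apply smooth_locally. intros x. destruct (Rlt_le_dec (- rho) x) as [Hx | Hx].
  - exists h. split; [exact Hh |].
    apply (filter_imp (fun y => - rho < y)); [| apply open_gt, Hx].
    intros y Hy. unfold glue. destruct (Rle_dec 0 y); [reflexivity |].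
    rewrite Hloc; [symmetry; apply Hgg | rewrite Rminus_0_r, Rabs_left; lra].
  - exists (fun y => ginv (h (f y))). split; [apply smooth_comp, smooth_comp; auto |].
    apply (filter_imp (fun y => y < 0)); [| apply open_lt; lra].
    intros y Hy. unfold glue. destruct (Rle_dec 0 y); [lra | reflexivity].
Qed.

Lemma glue_conjugates (f g h finv ginv hinv : R -> R) :
  decreasing f -> decreasing g -> f 0 = 0 -> g 0 = 0 -> increasing h -> h 0 = 0 ->
  is_inverse f finv -> is_inverse g ginv -> is_inverse h hinv ->
  (forall x, f (f x) = g (g x)) -> (forall x, h (f (f x)) = f (f (h x))) ->
  forall x, f x = glue g f hinv finv (g (glue f g h ginv x)).
Proof.
  intros Hf Hg Hf0 Hg0 Hh Hh0 [Hff _] [_ Hgg] Hhinv Hfg Hcomm x.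
  pose proof (is_inverse_0 h hinv Hhinv Hh0) as Hhinv0. destruct Hhinv as [Hhh _].
  unfold glue. destruct (Rle_dec 0 x) as [Hx | Hx].
  - destruct (Rle_dec 0 (g (h x))) as [Hghx | Hghx].
    + destruct Hx as [Hx | <-].
      * pose proof (proj1 (increasing_sign h x Hh Hh0) Hx) as Hhx.
        pose proof (proj1 (decreasing_sign g _ Hg Hg0) Hhx). lra.
      * rewrite Hh0, Hg0, Hf0, Hhinv0. reflexivity.
    + rewrite <- Hfg, <- Hcomm, Hhh, Hff. reflexivity.
  - rewrite Hgg.
    pose proof (proj2 (proj2 (decreasing_sign f x Hf Hf0)) ltac:(lra)) as Hfx.
    pose proof (proj1 (increasing_sign h _ Hh Hh0) Hfx) as Hhfx.
    destruct (Rle_dec 0 (h (f x))); [symmetry; apply Hhh | lra].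
Qed.

Lemma conjugacy_of_local_conjugacy (f g h hinv : R -> R) :
  Diffeo_minus f -> Diffeo_minus g -> f 0 = 0 -> g 0 = 0 -> (forall x, f (f x) = g (g x)) ->
  smooth h -> smooth hinv -> is_inverse h hinv -> increasing h -> h 0 = 0 ->
  (forall x, h (f (f x)) = f (f (h x))) -> locally 0 (fun x => h (f x) = g (h x)) ->
  exists k kinv, Diffeo_plus k /\ is_inverse k kinv /\ forall x, f x = kinv (g (k x)).
Proof.
  intros [[Hfs [finv [Hfinvs Hfinv]]] Hf] [[Hgs [ginv [Hginvs Hginv]]] Hg] Hf0 Hg0 Hfg
    Hhs Hhinvs Hhinv Hh Hh0 Hcomm Hconj.
  pose proof (is_inverse_0 _ _ Hfinv Hf0) as Hfinv0.
  pose proof (is_inverse_0 _ _ Hginv Hg0) as Hginv0.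
  pose proof (is_inverse_0 _ _ Hhinv Hh0) as Hhinv0.
  pose proof (decreasing_inverse _ _ Hf Hfinv) as Hfi.
  pose proof (decreasing_inverse _ _ Hg Hginv) as Hgi.
  pose proof (increasing_inverse _ _ Hh Hhinv) as Hhi.
  assert (Hconj' : locally 0 (fun x => hinv (g x) = f (hinv x))).
  { apply locally_conjugacy_inverse with h; auto using smooth_continuous. }
  assert (Hk : is_inverse (glue f g h ginv) (glue g f hinv finv)).
  { split; apply glue_cancel; auto using is_inverse_sym. }
  exists (glue f g h ginv), (glue g f hinv finv).
  split; [| split; [exact Hk | apply glue_conjugates; auto]].
  split; [split |].
  - apply smooth_glue; auto.
  - exists (glue g f hinv finv). split; [apply smooth_glue; auto using is_inverse_sym | exact Hk].
  - apply glue_increasing; auto.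
Qed.

Lemma unbounded_of_identity_far (h : R -> R) (d : R) : 0 <= d ->
  (forall x, d <= Rabs x -> h x = x) -> forall y, exists a b, h a < y < h b.
Proof.
  intros Hd Hid y. pose proof (Rle_abs y). pose proof (Rle_abs (- y)). rewrite Rabs_Ropp in *.
  exists (- Rabs y - d - 1), (Rabs y + d + 1).
  rewrite (Hid (- Rabs y - d - 1)) by (rewrite Rabs_left; lra).
  rewrite (Hid (Rabs y + d + 1)) by (rewrite Rabs_pos_eq; lra). lra.
Qed.

Lemma commuting_local_conjugacy (f g : R -> R) (eps : R) :
  smooth f -> smooth g -> decreasing f -> decreasing g -> f 0 = 0 -> g 0 = 0 ->
  (forall x, f (f x) = g (g x)) -> 0 < eps -> (forall x, Rabs x < eps -> f (f x) = x) ->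
  exists h hinv, smooth h /\ smooth hinv /\ is_inverse h hinv /\ increasing h /\ h 0 = 0 /\
    (forall x, h (f (f x)) = f (f (h x))) /\ locally 0 (fun x => h (f x) = g (h x)).
Proof.
  intros Hfs Hgs Hfdec Hgdec Hf0 Hg0 Hfg Heps Hfix.
  assert (Hfloc : locally 0 (fun x => f (f x) = x)).
  { apply (locally_Rabs 0 eps _ Heps). intros x; rewrite Rminus_0_r; apply Hfix. }
  assert (Hgloc : locally 0 (fun x => g (g x) = x)).
  { revert Hfloc; apply filter_imp; intros x; rewrite Hfg; auto. }
  destruct (local_conjugacy f g Hfs Hgs Hfdec Hgdec Hf0 Hg0 Hfloc Hgloc)
    as [l [Hl [Hl0 [Hl1 Hlconj]]]].
  destruct (local_diffeo_extension l (eps / 2) Hl Hl0 Hl1 ltac:(lra))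
    as [d [h [Hd [Hh [Hh' [Hid Hhl]]]]]].
  assert (Hhinc : increasing h) by (apply increasing_of_Derive_pos; auto).
  destruct (inverse_of_Derive_pos h Hh Hh' (unbounded_of_identity_far h d ltac:(lra) Hid))
    as [hinv [Hhinv Hinv]].
  assert (Hff : increasing (fun x => f (f x))) by (intros x y Hxy; apply Hfdec, Hfdec, Hxy).
  exists h, hinv. do 4 (split; auto). split; [| split].
  - rewrite (locally_singleton _ _ Hhl). exact Hl0.
  - apply (commute_with_local_identity (fun x => f (f x)) h eps d Hff Hfix Hhinc Hid). lra.
  - apply (locally_conjugacy_ext f g l h); auto using smooth_continuous.
Qed.

Theorem theorem4p1 (f g : R -> R) :
  Diffeo_minus f -> Diffeo_minus g ->
  f 0 = 0 -> g 0 = 0 ->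
  (forall x, f (f x) = g (g x)) ->
  (exists eps, 0 < eps /\ forall x, Rabs x < eps -> f (f x) = x) ->
  (exists h : R -> R,
      Diffeo_plus h /\ h 0 = 0 /\
      (forall x, h (f (f x)) = f (f (h x))) /\
      exists Hinv : fps,
        fps_comp Hinv (taylor0 h) = fps_X /\
        fps_comp (taylor0 h) Hinv = fps_X /\
        taylor0 f = fps_comp Hinv (fps_comp (taylor0 g) (taylor0 h)))
  /\
  (exists k kinv : R -> R,
      Diffeo_plus k /\ is_inverse k kinv /\
      forall x, f x = kinv (g (k x))).
Proof.
  intros Hf Hg Hf0 Hg0 Hfg [eps [Heps Hfix]].
  pose proof Hf as [[Hfs _] Hfdec]. pose proof Hg as [[Hgs _] Hgdec].
  destruct (commuting_local_conjugacy f g eps Hfs Hgs Hfdec Hgdec Hf0 Hg0 Hfg Heps Hfix)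
    as [h [hinv [Hh [Hhinv [Hinv [Hhinc [Hh0 [Hcomm Hconj]]]]]]]].
  split.
  - exists h. split; [split; [split; [exact Hh | exists hinv; auto] | exact Hhinc] |].
    split; [exact Hh0 | split; [exact Hcomm |]].
    exists (taylor0 hinv). destruct (taylor0_inverse h hinv Hh Hhinv Hinv Hh0) as [E1 E2].
    split; [exact E1 | split; [exact E2 | apply taylor0_conjugate; auto]].
  - apply (conjugacy_of_local_conjugacy f g h hinv); auto.
Qed.
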